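(* Let $\Omega=\mathbb{C}[x_1,\dots,x_n]\otimes\wedge\mathbb{C}^n$ be the algebra of polynomial differential forms and let $\mathcal{I}_n$ be its ideal generated by $p_1,\dots,p_n,dp_1,\dots,dp_n$, where $p_j=\sum_ix_i^j$ and $d$ is the exterior derivative. Let $1\le r\le n$ and let $h_r(x_r,\dots,x_n)$ be the complete homogeneous symmetric polynomial of degree $r$ in the variables $x_r,\dots,x_n$. Then for $i=r,\dots,n$, \[ \frac{\partial h_r(x_r,\dots,x_n)}{\partial x_i}\,dx_r\wedge\cdots\wedge dx_n\in\mathcal{I}_n. \] *)

From HB Require Import structures.
From mathcomp Require Import all_boot all_order all_algebra.
From mathcomp Require Import mpoly.
From mathcomp Require Import complex.
From mathcomp Require Import reals.

Set Implicit Arguments.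
Unset Strict Implicit.
Unset Printing Implicit Defensive.

Import Order.TTheory GRing.Theory Num.Theory.
Local Open Scope ring_scope.

Definition Cx (R : realType) : fieldType := (R[i])%C.

(* Polynomial differential forms Omega = K[x_1..x_n] (x) /\ K^n, represented
   by their coefficients on the basis dx_S (S a subset of 'I_n, increasing
   order of the indices). Variables x_1..x_n are 'X_0 .. 'X_(n-1). *)
Definition form (K : fieldType) (n : nat) := {ffun {set 'I_n} -> {mpoly K[n]}}.

(* sign of dx_S /\ dx_T = sgn(S,T) dx_(S u T) for disjoint S, T:
   (-1)^(number of pairs s in S, t in T with t < s) *)
Definition wsign (K : fieldType) (n : nat) (S T : {set 'I_n}) : {mpoly K[n]} :=
  (-1) ^+ #|[set st : 'I_n * 'I_n | (st.1 \in S) && (st.2 \in T) && (st.2 < st.1)%N]|.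

Definition wedge (K : fieldType) (n : nat) (w v : form K n) : form K n :=
  [ffun U => \sum_(S : {set 'I_n}) \sum_(T : {set 'I_n} |
                 [disjoint S & T] && (S :|: T == U))
               wsign K S T * w S * v T].

Definition form0 (K : fieldType) (n : nat) (f : {mpoly K[n]}) : form K n :=
  [ffun S => if S == set0 then f else 0].

Definition dpoly (K : fieldType) (n : nat) (f : {mpoly K[n]}) : form K n :=
  [ffun S => \sum_(i : 'I_n | S == [set i]) mderiv i f].

Definition psum (K : fieldType) (n : nat) (j : nat) : {mpoly K[n]} :=
  \sum_(i < n) 'X_i ^+ j.

(* membership in the ideal I_n of Omega generated by p_1..p_n, dp_1..dp_n.
   (Omega is graded-commutative and generators homogeneous, so the left ideal
   generated coincides with the two-sided ideal.) *)
Definition in_In (K : fieldType) (n : nat) (w : form K n) : Prop :=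
  exists (a b : 'I_n -> form K n),
    w = \sum_(j < n) (wedge (a j) (form0 (psum K n j.+1))
                      + wedge (b j) (dpoly (psum K n j.+1))).

(* complete homogeneous symmetric polynomial of degree r in x_r,...,x_n,
   i.e. in the variables 'X_k with (r-1) <= k (0-based) *)
Definition hcomp (K : fieldType) (n r : nat) : {mpoly K[n]} :=
  \sum_(m : 'X_{1..n < r.+1} |
          (mdeg m == r) && [forall k : 'I_n, (k < r.-1)%N ==> (m k == 0%N)])
    'X_[(m : 'X_{1..n})].

Definition top_from (K : fieldType) (n r : nat) (f : {mpoly K[n]}) : form K n :=
  [ffun S => if S == [set k : 'I_n | (r.-1 <= k)%N] then f else 0].

From Pilot Require Import Defs.
From HB Require Import structures.
From mathcomp Require Import all_boot all_order all_algebra.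
From mathcomp Require Import mpoly.
From mathcomp Require Import complex.
From mathcomp Require Import reals.
From mathcomp Require Import zify.

(* Let h = h_r(x_r,...,x_n) and let J be the ideal of K[x] generated by
   p_1,...,p_n. Newton's identities k h_k = \sum_i p_i h_(k-i) put
   h_k(x_1,...,x_n) in J for k <= n, and the recurrence
   h_k(x_m,...,x_n) = h_k(x_(m+1),...,x_n) + x_m h_(k-1)(x_m,...,x_n)
   propagates this to h_k(x_m,...,x_n) for m <= k <= n; so h = \sum_j f_j p_j.
   By Leibniz, dh = \sum_j f_j dp_j modulo J Omega. Since h does not involve
   x_1,...,x_(r-1), for S = {r,...,n} and i in S we get
   dx_(S\i) /\ dh = +-(dh/dx_i) dx_S, hence
   +-(dh/dx_i) dx_S = \sum_j (f_j dx_(S\i)) /\ dp_j  modulo J Omega. *)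

Set Implicit Arguments.
Unset Strict Implicit.
Unset Printing Implicit Defensive.
Import GRing.Theory Num.Theory.
Local Open Scope ring_scope.

Section Monomials.
Variable n : nat.

Lemma mcoeffXM (R : comRingType) (u v : 'X_{1..n}) (q : {mpoly R[n]}) :
  ('X_[u] * q)@_v = if (u <= v)%MM then q@_(v - u) else 0.
Proof.
case: ifPn => [le_uv | nle_uv]; first by rewrite -{1}(submK le_uv) addmC mulrC mcoeffMX.
rewrite mcoeffM big1 // => w /eqP eq_v; rewrite mcoeffX.
case: eqP => [eq_u | _]; last by rewrite mul0r.
by rewrite eq_v -eq_u lem_addr in nle_uv.
Qed.

Lemma mdeg_subm (u v : 'X_{1..n}) : (u <= v)%MM -> mdeg (v - u) = (mdeg v - mdeg u)%N.
Proof. by move=> le_uv; rewrite -{2}(submK le_uv) mdegD addnK. Qed.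

Lemma mnm_le_mdeg (v : 'X_{1..n}) j : (v j <= mdeg v)%N.
Proof. by rewrite mdegE (bigD1 j) //= leq_addr. Qed.

Lemma lem_mulmn1 (j : 'I_n) c (v : 'X_{1..n}) : (U_(j) *+ c <= v)%MM = (c <= v j)%N.
Proof.
apply/mnm_lepP/idP => [/(_ j) | le_cv l]; first by rewrite mulmnE mnm1E eqxx mul1n.
by rewrite mulmnE mnm1E; case: (j =P l) => [<-|_]; rewrite ?mul1n ?mul0n.
Qed.

End Monomials.

Lemma sum_ord_ltn k a : (\sum_(i < k) (i < a)%N)%N = minn a k.
Proof.
elim: k => [|k IHk]; first by rewrite big_ord0 minn0.
by rewrite big_ord_recr /= IHk; case: (ltnP k a) => /= ?; lia.
Qed.

Section CompleteHomogeneous.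
Variables (K : fieldType) (n : nat).

Definition vanish_below m (v : 'X_{1..n}) : bool :=
  [forall j : 'I_n, (j < m)%N ==> (v j == 0%N)].

(* h_k(x_(m+1),...,x_n), the variables x_1,...,x_n being 'X_0,...,'X_(n-1) *)
Definition htail (m k : nat) : {mpoly K[n]} :=
  \sum_(u : 'X_{1..n < k.+1} | (mdeg u == k) && vanish_below m u) 'X_[(u : 'X_{1..n})].

Lemma hcompE r : hcomp K n r = htail r.-1 r.
Proof. by []. Qed.

Lemma mcoeff_htail m k v : (htail m k)@_v = ((mdeg v == k) && vanish_below m v)%:R.
Proof.
rewrite /htail raddf_sum /=.
have [deg_v | ndeg_v] := eqVneq (mdeg v) k; last first.
  rewrite big1 // => u /andP [/eqP deg_u _]; rewrite mcoeffX.
  by case: eqP => // eq_uv; rewrite -eq_uv deg_u eqxx in ndeg_v.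
have lt_v : (mdeg v < k.+1)%N by rewrite deg_v.
have [van_v | nvan_v] := boolP (vanish_below m v).
  rewrite (bigD1 (BMultinom lt_v)) /=; last by rewrite deg_v eqxx.
  rewrite mcoeffX eqxx big1 ?addr0 // => u /andP [_ neq_u]; rewrite mcoeffX.
  by case: eqP => // eq_uv; case/eqP: neq_u; apply/val_inj.
rewrite big1 // => u /andP [_ van_u]; rewrite mcoeffX.
by case: eqP => // eq_uv; rewrite -eq_uv van_u in nvan_v.
Qed.

Lemma vanish_below0 v : vanish_below 0 v.
Proof. exact/forallP. Qed.

Lemma vanish_belowS (o : 'I_n) v : vanish_below o.+1 v = vanish_below o v && (v o == 0%N).
Proof.
apply/forallP/andP => [van | [/forallP van v_o] j].
  split; last by move: (van o); rewrite ltnSn.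
  by apply/forallP => j; apply/implyP => lt_jo; apply: (implyP (van j)); rewrite ltnS ltnW.
apply/implyP; rewrite ltnS leq_eqVlt => /orP [/eqP eq_jo | lt_jo].
  by rewrite (_ : j = o) //; apply/val_inj.
exact: (implyP (van j)).
Qed.

Lemma vanish_belowB1 (o : 'I_n) m v :
  (m <= o)%N -> vanish_below m (v - U_(o)) = vanish_below m v.
Proof.
move=> le_mo; apply: eq_forallb => j; case: (ltnP j m) => //= lt_jm.
rewrite mnmBE mnm1E; case: (o =P j) => [eq_oj | _]; last by rewrite subn0.
by rewrite -eq_oj ltnNge le_mo in lt_jm.
Qed.

Lemma htail_rec m k (lt_mn : (m < n)%N) : (0 < k)%N ->
  htail m k = htail m.+1 k + 'X_(Ordinal lt_mn) * htail m k.-1.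
Proof.
move=> k_gt0; apply/mpolyP => v; set o := Ordinal lt_mn.
rewrite mcoeffD mcoeffXM !mcoeff_htail (_ : m = o) // vanish_belowS lep1mP.
have [v_o | v_o] /= := eqVneq (v o) 0%N; first by rewrite andbT addr0.
rewrite !andbF add0r vanish_belowB1 // mdeg_subm ?lep1mP // mdeg1.
have le_vo := mnm_le_mdeg v o; congr ((_ && _)%:R); apply/eqP/eqP; lia.
Qed.

Lemma htail_newton k : (0 < k)%N ->
  htail 0 k *+ k = \sum_(i < k) psum K n i.+1 * htail 0 (k - i.+1).
Proof.
(* At v of degree k both sides are \sum_j v_j: x^v arises as x_j^(i+1) x^(v - (i+1) U_j)
   exactly for the i < v_j. *)
move=> k_gt0; apply/mpolyP => v.
rewrite mcoeffMn mcoeff_htail vanish_below0 andbT raddf_sum /=.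
transitivity (\sum_(i < k) \sum_(j < n) ((i < v j)%N && (mdeg v == k))%:R : K); last first.
  apply: eq_bigr => i _; rewrite /psum mulr_suml raddf_sum; apply: eq_bigr => j _ /=.
  rewrite mpolyXn mcoeffXM lem_mulmn1; case: ifP => //= lt_iv.
  rewrite mcoeff_htail vanish_below0 andbT mdeg_subm ?lem_mulmn1 // mdegMn mdeg1 mul1n.
  have le_vj := mnm_le_mdeg v j; have lt_ik := ltn_ord i.
  by congr (_%:R); apply/eqP/eqP; lia.
have [deg_v | ndeg_v] := eqVneq (mdeg v) k; last first.
  by rewrite mul0rn big1 // => i _; rewrite big1 // => j _; rewrite andbF.
under eq_bigr => i _ do under eq_bigr => j _ do rewrite andbT.
under eq_bigr => i _ do rewrite -natr_sum.
rewrite mulr1n -natr_sum exchange_big /=; congr (_%:R).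
rewrite -deg_v {1}mdegE; apply: eq_bigr => j _; rewrite sum_ord_ltn.
by have := mnm_le_mdeg v j; lia.
Qed.

Lemma mderiv_htail_below m k (j : 'I_n) : (j < m)%N -> mderiv j (htail m k) = 0.
Proof.
move=> lt_jm; apply/mpolyP => v; rewrite mcoeff_mderiv mcoeff_htail mcoeff0.
suff /negbTE -> : ~~ vanish_below m (v + U_(j)) by rewrite andbF mul0rn.
by apply/forallP => /(_ j); rewrite lt_jm mnmDE mnm1E eqxx addn1.
Qed.

End CompleteHomogeneous.

Section PowerSumIdeal.
Variables (K : fieldType) (n : nat).

Definition in_psum_ideal (f : {mpoly K[n]}) : Prop :=
  exists c : 'I_n -> {mpoly K[n]}, f = \sum_(j < n) c j * psum K n j.+1.

Lemma in_psum_ideal0 : in_psum_ideal 0.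
Proof. by exists (fun=> 0); rewrite big1 // => j _; rewrite mul0r. Qed.

Lemma in_psum_idealD f g : in_psum_ideal f -> in_psum_ideal g -> in_psum_ideal (f + g).
Proof.
move=> [c ->] [d ->]; exists (fun j => c j + d j).
by rewrite -big_split; apply: eq_bigr => j _; rewrite mulrDl.
Qed.

Lemma in_psum_idealMl g f : in_psum_ideal f -> in_psum_ideal (g * f).
Proof.
move=> [c ->]; exists (fun j => g * c j).
by rewrite mulr_sumr; apply: eq_bigr => j _; rewrite mulrA.
Qed.

Lemma in_psum_idealB f g : in_psum_ideal f -> in_psum_ideal g -> in_psum_ideal (f - g).
Proof. by move=> If Ig; apply: in_psum_idealD => //; rewrite -mulN1r; apply: in_psum_idealMl. Qed.

Lemma in_psum_ideal_sum (I : finType) (P : pred I) (F : I -> {mpoly K[n]}) :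
  (forall i, P i -> in_psum_ideal (F i)) -> in_psum_ideal (\sum_(i | P i) F i).
Proof. exact: (big_ind in_psum_ideal in_psum_ideal0 in_psum_idealD). Qed.

Lemma in_psum_ideal_psum k : (0 < k <= n)%N -> in_psum_ideal (psum K n k).
Proof.
case/andP => k_gt0 le_kn; have lt_kn : (k.-1 < n)%N by lia.
exists (fun j : 'I_n => (j.+1 == k)%:R); rewrite (bigD1 (Ordinal lt_kn)) //=.
rewrite prednK // eqxx mul1r big1 ?addr0 // => j neq_j.
case: eqP => [eq_jk | _]; last by rewrite mul0r.
by case/eqP: neq_j; apply/val_inj; rewrite /= -eq_jk.
Qed.

Lemma mderiv_psum_combination (f : 'I_n -> {mpoly K[n]}) k :
  in_psum_ideal (mderiv k (\sum_(j < n) f j * psum K n j.+1)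
                 - \sum_(j < n) f j * mderiv k (psum K n j.+1)).
Proof.
rewrite raddf_sum /=; under eq_bigr => j _ do rewrite mderivM.
by rewrite big_split /= addrK; exists (fun j => mderiv k (f j)).
Qed.

Hypothesis charK0 : [pchar K] =i pred0.

Lemma htail0_in_psum_ideal k : (0 < k <= n)%N -> in_psum_ideal (htail K n 0 k).
Proof.
case/andP => k_gt0 le_kn.
have -> : htail K n 0 k = (k%:R^-1 : K) *: (htail K n 0 k *+ k).
  by rewrite -scaler_nat scalerA mulVf ?scale1r // (pcharf0P _).1 // -lt0n.
rewrite -mul_mpolyC htail_newton //; apply/in_psum_idealMl/in_psum_ideal_sum => i _.
by rewrite mulrC; apply/in_psum_idealMl/in_psum_ideal_psum; have := ltn_ord i; lia.
Qed.

Lemma htail_in_psum_ideal m k : (m < k <= n)%N -> in_psum_ideal (htail K n m k).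
Proof.
elim: m k => [|m IHm] k lt_mkn; first exact: htail0_in_psum_ideal.
have lt_mn : (m < n)%N by lia.
rewrite (_ : htail K n m.+1 k = htail K n m k - 'X_(Ordinal lt_mn) * htail K n m k.-1).
  by apply: in_psum_idealB; [|apply: in_psum_idealMl]; apply: IHm; lia.
by rewrite (htail_rec _ lt_mn) ?addrK //; lia.
Qed.

End PowerSumIdeal.

Section Forms.
Variables (K : fieldType) (n : nat).

Definition dxform (S : {set 'I_n}) (g : {mpoly K[n]}) : Defs.form K n :=
  [ffun T => if T == S then g else 0].

Lemma top_fromE r f : top_from r f = dxform [set k : 'I_n | (r.-1 <= k)%N] f.
Proof. by []. Qed.

Lemma wsign_set0 (S : {set 'I_n}) : wsign K S set0 = 1.
Proof.
rewrite /wsign (_ : [set _ | _] = set0) ?cards0 ?expr0 //.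
by apply/setP => st; rewrite !inE andbF.
Qed.

Lemma wsign_sqr (S T : {set 'I_n}) : wsign K S T * wsign K S T = 1.
Proof. by rewrite -expr2 -exprM mulnC exprM sqrrN expr1n expr1n. Qed.

Lemma wedge_form0 (w : Defs.form K n) q U : wedge w (form0 q) U = w U * q.
Proof.
rewrite ffunE (bigD1 U) //= [X in _ + X]big1 ?addr0; last first.
  move=> S neq_SU; rewrite big1 // => T /andP [_ /eqP eq_U]; rewrite ffunE.
  case: (T =P set0) => [T0 | _]; last by rewrite mulr0.
  by rewrite T0 setU0 in eq_U; rewrite eq_U eqxx in neq_SU.
rewrite (bigD1 set0) /=; last by rewrite setU0 eqxx andbT disjoints_subset setC0 subsetT.
rewrite ffunE eqxx wsign_set0 mul1r big1 ?addr0 // => T /andP [_ nT0].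
by rewrite ffunE (negbTE nT0) mulr0.
Qed.

Lemma wedge_dxform_dpoly S g q U :
  wedge (dxform S g) (dpoly q) U =
  \sum_(k : 'I_n | (k \notin S) && (S :|: [set k] == U)) wsign K S [set k] * g * mderiv k q.
Proof.
rewrite ffunE (bigD1 S) //= [X in _ + X]big1 ?addr0; last first.
  by move=> T neq_TS; rewrite big1 // => T' _; rewrite ffunE (negbTE neq_TS) mulr0 mul0r.
rewrite ffunE eqxx; under eq_bigr => T _ do rewrite ffunE mulr_sumr.
rewrite (exchange_big_dep (fun k : 'I_n => (k \notin S) && (S :|: [set k] == U))) /=; last first.
  by move=> T k /andP [dis_ST eq_U] /eqP eq_T; rewrite -disjoints1 disjoint_sym -eq_T dis_ST.
apply: eq_bigr => k /andP [kNS eq_U]; rewrite (big_pred1 [set k]) // => T /=.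
case: (T =P [set k]) => [-> | _]; last by rewrite andbF.
by rewrite andbT eq_U disjoint_sym disjoints1 kNS.
Qed.

Lemma wedge_dxform_dpoly_top (S : {set 'I_n}) i g q : i \in S ->
    (forall k, k \notin S -> mderiv k q = 0) ->
  wedge (dxform (S :\ i) g) (dpoly q) = dxform S (wsign K (S :\ i) [set i] * g * mderiv i q).
Proof.
move=> iS dq0; apply/ffunP => U; rewrite wedge_dxform_dpoly ffunE.
have [-> | neq_US] := eqVneq U S.
  rewrite (big_pred1 i) // => k /=; apply/andP/eqP => [[kNS /eqP eq_S] | ->].
    have kS : k \in S by rewrite -eq_S !inE eqxx orbT.
    by move: kNS; rewrite in_setD1 kS andbT negbK => /eqP.
  by rewrite setD11 setUC setD1K.
rewrite big1 // => k /andP [kNS /eqP eq_U].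
suff /dq0 -> : k \notin S by rewrite mulr0.
apply: contra neq_US => kS; rewrite -eq_U.
by move: kNS; rewrite in_setD1 kS andbT negbK => /eqP ->; rewrite setUC setD1K.
Qed.

Lemma wedge_dpoly_psum_combination S g (f : 'I_n -> {mpoly K[n]}) U :
  in_psum_ideal (wedge (dxform S g) (dpoly (\sum_(j < n) f j * psum K n j.+1)) U
                 - (\sum_(j < n) wedge (dxform S (g * f j)) (dpoly (psum K n j.+1))) U).
Proof.
rewrite sum_ffunE; under [X in _ - X]eq_bigr => j _ do rewrite wedge_dxform_dpoly.
rewrite wedge_dxform_dpoly exchange_big -sumrB /=; apply: in_psum_ideal_sum => k _.
under [X in _ - X]eq_bigr => j _ do rewrite -!mulrA.
rewrite -!mulr_sumr -!mulrA -!mulrBr; apply/in_psum_idealMl/in_psum_idealMl.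
exact: mderiv_psum_combination.
Qed.

Lemma in_In_of_wedge_dpsum (w : Defs.form K n) (b : 'I_n -> Defs.form K n) :
    (forall U, in_psum_ideal (w U - (\sum_(j < n) wedge (b j) (dpoly (psum K n j.+1))) U)) ->
  in_In w.
Proof.
case/fin_all_exists => c wE; exists (fun j => [ffun U => c U j]), b.
apply/ffunP => U; rewrite sum_ffunE.
under eq_bigr => j _ do rewrite ffunE wedge_form0 ffunE.
by rewrite big_split /= -wE -sum_ffunE subrK.
Qed.

End Forms.

Lemma top_mderiv_hcomp_in_In (K : fieldType) (n r : nat) (i : 'I_n) :
    [pchar K] =i pred0 -> (1 <= r)%N -> (r <= n)%N -> (r <= i.+1)%N ->
  in_In (top_from r (mderiv i (hcomp K n r))).
Proof.
move=> charK0 r_gt0 le_rn le_ri; rewrite top_fromE.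
set S := [set k : 'I_n | (r.-1 <= k)%N]; set h := hcomp K n r.
have iS : i \in S by rewrite inE; lia.
have [f hE] : in_psum_ideal h by rewrite /h hcompE; apply: htail_in_psum_ideal => //; lia.
have dh0 k : k \notin S -> mderiv k h = 0.
  by rewrite inE -ltnNge /h hcompE; apply: mderiv_htail_below.
set s := wsign K (S :\ i) [set i].
have -> : dxform S (mderiv i h) = wedge (dxform (S :\ i) s) (dpoly h).
  by rewrite wedge_dxform_dpoly_top // wsign_sqr mul1r.
apply: (@in_In_of_wedge_dpsum _ _ _ (fun j => dxform (S :\ i) (s * f j))) => U.
by rewrite {1}hE; apply: wedge_dpoly_psum_combination.
Qed.

Theorem lemma18 (R : realType) (n r : nat) (hr1 : (1 <= r)%N) (hrn : (r <= n)%N)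
    (i : 'I_n) (hi : (r <= i.+1)%N) :
  in_In (top_from r (mderiv i (hcomp (Cx R) n r))).
Proof. exact: top_mderiv_hcomp_in_In (@pchar_num R[i]) hr1 hrn hi. Qed.
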